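(* Let $(\lambda,\vartheta,\zeta_0)$ be fluid model data as in the context. If $\lambda\mathbf E[B1_{\{D=\infty\}}]<1$ and $\mathbf E[\min\{B,D\}]<\infty$, then every fluid model solution $z(\cdot)$ is bounded on $[0,\infty)$.
   Context: $\overline{\mathbb R}_+=[0,\infty]$. Fluid model data: $\lambda>0$; $\vartheta$ a Borel probability measure on $\overline{\mathbb R}_+^2$ with $\vartheta(\{0\}\times\overline{\mathbb R}_+)=\vartheta(\overline{\mathbb R}_+\times\{0\})=\vartheta(\{(\infty,\infty)\})=0$, $(B,D)$ a random pair with law $\vartheta$, $\rho=\lambda\mathbf E[B]>1$; $\zeta_0$ a finite nonnegative Borel measure on $\overline{\mathbb R}_+^2$ with marginals free of atoms in $[0,\infty)$ and total mass $z_0$; if $z_0>0$, $(B^0,D^0)$ has law $\zeta_0/z_0$. A fluid model solution is a continuous function $z:[0,\infty)\to[0,\infty)$ with $\inf_{t>a}z(t)>0$ for all $a>0$ satisfying $z(t)=z_0\mathbf P(B^0>S(0,t);D^0>t)+\lambda\int_0^t\mathbf P(B>S(s,t);D>t-s)ds$ for $t\ge0$, where $S(u,v)=\int_u^vz(s)^{-1}ds$ (the first term is $0$ if $z_0=0$); equivalently $z$ is the total mass of a measure valued fluid model solution. *)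

From HB Require Import structures.
From mathcomp Require Import all_boot all_order all_algebra.
From mathcomp Require Import all_classical all_reals all_analysis measurable_realfun.
Set Implicit Arguments. Unset Strict Implicit. Unset Printing Implicit Defensive.
Import Order.TTheory GRing.Theory Num.Theory numFieldNormedType.Exports.
Local Open Scope classical_set_scope.
Local Open Scope ring_scope.

(* S(u,v) = int_u^v z(s)^{-1} ds, valued in [0, +oo] (extended real).
   (z is positive on (0,oo), so the convention 0^-1 = 0 at the single point
   s = 0 is irrelevant: it is a Lebesgue-null set.) *)
Definition Sfun (R : realType) (z : R -> R) (u v : R) : \bar R :=
  (\int[@lebesgue_measure R]_(s in `[u, v]) ((z s)^-1)%:E)%E.

Definition quadrant (R : realType) : set (\bar R * \bar R) :=
  [set p | (0 <= p.1)%E /\ (0 <= p.2)%E].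

Definition fluid_data (R : realType) (lam : R)
  (theta : probability (\bar R * \bar R)%type R)
  (zeta0 : {finite_measure set (\bar R * \bar R)%type -> \bar R}) : Prop :=
  [/\ 0 < lam,
      [/\ theta (~` @quadrant R) = 0%E,
        theta [set p | p.1 = 0%E /\ (0 <= p.2)%E] = 0%E,
        theta [set p | (0 <= p.1)%E /\ p.2 = 0%E] = 0%E &
        theta [set (+oo, +oo)%E] = 0%E],
      (1 < lam%:E * \int[theta]_p p.1)%E &
      [/\ zeta0 (~` @quadrant R) = 0%E,
          (forall x : R, 0 <= x ->
             zeta0 [set p | p.1 = x%:E /\ (0 <= p.2)%E] = 0%E) &
          (forall x : R, 0 <= x ->
             zeta0 [set p | (0 <= p.1)%E /\ p.2 = x%:E] = 0%E)]].

(* Fluid model solution. Note z0 P(B^0 > S(0,t); D^0 > t)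
   = zeta0 {(b,d) : b > S(0,t), d > t} (and this is 0 when z0 = 0). *)
Definition fluid_solution (R : realType) (lam : R)
  (theta : probability (\bar R * \bar R)%type R)
  (zeta0 : {finite_measure set (\bar R * \bar R)%type -> \bar R})
  (z : R -> R) : Prop :=
  [/\ {within `[0%R, +oo[, continuous z},
      (forall t, 0 <= t -> 0 <= z t),
      (forall a, 0 < a -> exists c, 0 < c /\ forall t, a < t -> c <= z t) &
      (forall t, 0 <= t ->
         (z t)%:E =
           (zeta0 [set p | (Sfun z 0%R t < p.1)%E /\ (t%:E < p.2)%E]
            + lam%:E * \int[@lebesgue_measure R]_(s in `[0%R, t])
                 theta [set p | (Sfun z s t < p.1)%E /\ ((t - s)%:E < p.2)%E])%E)].

From HB Require Import structures.
From mathcomp Require Import all_boot all_order all_algebra.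
From mathcomp Require Import all_classical all_reals all_analysis measurable_realfun.
From mathcomp Require Import lra.

(* Choose K with lam E[min(B, D); D > K] < 1: these tails decrease to
   E[B; D = oo] as K grows, by dominated convergence.  Let t maximise z on
   [0, T] and m = z t > 1.  Since z <= m on [0, t], S(s, t) >= (t - s) / m, so
   the fluid equation gives m <= z0 + lam \int_0^t P(B > u / m, D > u) du.
   Cutting u at the integers, the integral is at most
   \sum_n P(B > n / m, D > n), and counting the n below min(m B, D) bounds
   this sum by K + 2 + m c, where c = E[min(B, D); D > K].  Hence
   m <= z0 + lam (K + 2) + lam c m with lam c < 1, a bound independent of T. *)

Set Implicit Arguments.
Unset Strict Implicit.
Unset Printing Implicit Defensive.
Import Order.TTheory GRing.Theory Num.Theory numFieldNormedType.Exports.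
Local Open Scope classical_set_scope.
Local Open Scope ring_scope.
Local Open Scope ereal_scope.

Section extended_quadrant.
Variable R : realType.
Implicit Types (a b : \bar R) (A B : set (\bar R)).

Lemma measurable_fst_snd A B : measurable A -> measurable B ->
  measurable [set p : \bar R * \bar R | A p.1 /\ B p.2].
Proof.
move=> mA mB; have := measurableI _ _ (measurable_fst measurableT _ mA)
  (measurable_snd measurableT _ mB).
by rewrite !setTI.
Qed.

Lemma measurable_snd_set B : measurable B ->
  measurable [set p : \bar R * \bar R | B p.2].
Proof.
move=> mB; have := @measurable_fst_snd setT _ measurableT mB.
by congr measurable; apply/seteqP; split=> p //= [].
Qed.

Lemma measurable_lt_fst_snd a b :
  measurable [set p : \bar R * \bar R | a < p.1 /\ b < p.2].
Proof.
have := measurable_fst_snd (emeasurable_itv `]a, +oo[) (emeasurable_itv `]b, +oo[).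
by congr measurable; apply/seteqP; split=> p /=; rewrite !in_itv/= !andbT.
Qed.

Lemma measurable_snd_gt b : measurable [set p : \bar R * \bar R | b < p.2].
Proof.
have := measurable_snd_set (emeasurable_itv `]b, +oo[).
by congr measurable; apply/seteqP; split=> p /=; rewrite in_itv/= andbT.
Qed.

Lemma measurable_quadrant : measurable (@quadrant R).
Proof.
have := measurable_fst_snd (emeasurable_itv `[0, +oo[) (emeasurable_itv `[0, +oo[).
by congr measurable; apply/seteqP; split=> p /=; rewrite !in_itv/= !andbT.
Qed.

Lemma measurable_fun_min_fst_snd (D : set (\bar R * \bar R)) :
  measurable_fun D (fun p : \bar R * \bar R => Order.min p.1 p.2).
Proof.
by apply: measurable_mine; apply: (measurable_funS measurableT (subsetT D));
  [exact: measurable_fst|exact: measurable_snd].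
Qed.

End extended_quadrant.

Lemma integral_setI_conull d (T : measurableType d) (R : realType)
    (mu : {measure set T -> \bar R}) (A D : set T) (f : T -> \bar R) :
  measurable A -> mu (~` A) = 0 -> measurable D -> measurable_fun D f ->
  \int[mu]_(x in D) f x = \int[mu]_(x in D `&` A) f x.
Proof.
move=> mA muA0 mD mf; rewrite integralE [RHS]integralE -[A in D `&` A]setCK -setDE.
rewrite (ge0_negligible_integral (measurableC mA) mD _ _ muA0) //;
  last exact: measurable_funepos.
by rewrite [X in _ - X](ge0_negligible_integral (measurableC mA) mD _ _ muA0) //;
  exact: measurable_funeneg.
Qed.

Section min_tail.
Variables (R : realType) (mu : {measure set (\bar R * \bar R) -> \bar R}).
Local Notation Q := (@quadrant R).
Hypothesis mu_quadrant : mu (~` Q) = 0.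
Hypothesis integrable_min : \int[mu]_p Order.min p.1 p.2 < +oo.

Definition min_tail (K : R) :=
  \int[mu]_(p in Q `&` [set p | K%:E < p.2]) Order.min p.1 p.2.

Let mn (p : \bar R * \bar R) := Order.min p.1 p.2.

Let mn_ge0 p : Q p -> 0 <= mn p.
Proof. by case=> p1 p2; rewrite le_min p1 p2. Qed.

Let mQ := @measurable_quadrant R.

Lemma cvg_min_tail :
  min_tail n%:R @[n --> \oo] --> \int[mu]_(p in [set p | p.2 = +oo]) p.1.
Proof.
pose S := [set p : \bar R * \bar R | p.2 = +oo].
pose T n := [set p : \bar R * \bar R | (n%:R : R)%:E < p.2].
have mS : measurable S := measurable_snd_set (emeasurable_set1 +oo).
have mT n : measurable (T n) by exact: measurable_snd_gt.
have -> : \int[mu]_(p in S) p.1 = \int[mu]_(p in Q) (mn \_ S) p.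
  rewrite (integral_setI_conull mQ) //; last first.
    exact: measurable_funS measurableT _ measurable_fst.
  rewrite setIC integral_mkcondr.
  apply: eq_integral => p _; rewrite /patch; case: ifP => // /set_mem /= p2oo.
  by rewrite /mn p2oo min_l ?leey.
have -> : min_tail = fun K => \int[mu]_(p in Q) (mn \_ [set p | K%:E < p.2]) p.
  by apply/funext => K; rewrite /min_tail integral_mkcondr.
have mn_int : mu.-integrable Q mn.
  apply/integrableP; split; first exact: measurable_fun_min_fst_snd.
  rewrite (eq_integral mn) => [|p /set_mem Qp]; last by rewrite gee0_abs ?mn_ge0.
  by rewrite -(setTI Q) -integral_setI_conull //; exact: measurable_fun_min_fst_snd.
have mnT n : measurable_fun Q (mn \_ (T n)).
  by apply/(measurable_restrict _ (mT n) mQ); exact: measurable_fun_min_fst_snd.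
have mnS : measurable_fun Q (mn \_ S).
  by apply/(measurable_restrict _ mS mQ); exact: measurable_fun_min_fst_snd.
have mnT_cvg : \forall p \ae mu, Q p -> (mn \_ (T n)) p @[n --> \oo] --> (mn \_ S) p.
  apply: aeW => p Qp; apply: cvg_near_cst.
  have [p2oo|p2fin] := eqVneq p.2 +oo.
    have Tp n : T n p by rewrite /T /= p2oo ltey.
    by near=> n; rewrite /patch !mem_set.
  have nSp : ~ S p by apply/eqP.
  rewrite /patch (memNset nSp).
  near=> n; rewrite memNset // /T /=; apply/negP; rewrite -leNgt.
  rewrite -[p.2]fineK; last by rewrite ge0_fin_numE ?ltey //; case: Qp.
  rewrite lee_fin; near: n.
  exists (Num.truncn (fine p.2)).+1 => // n /= ltn.
  by apply/ltW/(lt_le_trans (truncnS_gt _)); rewrite ler_nat.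
have mnT_le : \forall p \ae mu, forall n, Q p -> `|(mn \_ (T n)) p| <= mn p.
  apply: aeW => p n Qp; rewrite /patch; case: ifP => _.
    by rewrite gee0_abs ?mn_ge0.
  by rewrite abse0 mn_ge0.
by have [] := dominated_convergence mQ mnT mnS mnT_cvg mn_int mnT_le.
Unshelve. all: end_near. Qed.

Lemma min_tail_ge0 K : 0 <= min_tail K.
Proof. by apply: integral_ge0 => p [/mn_ge0]. Qed.

Lemma exists_min_tail_lt (lam : R) : (0 < lam)%R ->
  lam%:E * \int[mu]_(p in [set p | p.2 = +oo]) p.1 < 1 ->
  exists K : nat, exists2 c : R, min_tail K%:R = c%:E & (lam * c < 1)%R.
Proof.
move=> lam0 lt1; have [N _ /(_ N (leqnn N)) /= ltN] :=
  cvgeZl (y := lam%:E) isT cvg_min_tail (open_ereal_lt' lt1).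
have tailN_fin : min_tail N%:R \is a fin_num.
  rewrite ge0_fin_numE ?min_tail_ge0 // ltey; apply: contraTneq ltN => ->.
  by rewrite gt0_muley ?lte_fin.
by exists N, (fine (min_tail N%:R)); rewrite ?fineK // -lte_fin EFinM fineK.
Qed.

End min_tail.

(* A nonnegative integral is a supremum over simple minorants, hence monotone
   without any measurability; the integrand s |-> theta (...) of the fluid
   equation is not known to be measurable. *)
Lemma ge0_le_integral_nonmeasurable d (T : measurableType d) (R : realType)
    (mu : {measure set T -> \bar R}) (D : set T) (f g : T -> \bar R) :
  (forall x, D x -> 0 <= f x) -> (forall x, D x -> f x <= g x) ->
  \int[mu]_(x in D) f x <= \int[mu]_(x in D) g x.
Proof.
move=> f0 fg; have g0 x : D x -> 0 <= g x.
  by move=> Dx; exact: le_trans (f0 x Dx) (fg x Dx).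
rewrite !ge0_integralE//; apply: ereal_sup_le => _ [h /= hf <-].
exists h => //= x; apply: le_trans (hf x) _.
by rewrite /patch; case: ifP => // /set_mem; exact: fg.
Qed.

Lemma sum_bool_le_add1 (R : realDomainType) (x : \bar R) (b : nat -> bool) (M : nat) :
  0 <= x -> (forall n, b n -> (n%:R : R)%:E < x) ->
  \sum_(n < M) ((b n)%:R : R)%:E <= x + 1.
Proof.
move=> x0 bx; elim: M => [|M IH]; first by rewrite big_ord0 adde_ge0.
rewrite big_ord_recr /=; case: (boolP (b M)) => [bM|_]; last by rewrite adde0.
have sum_le_M : \sum_(n < M) ((b n)%:R : R)%:E <= (M%:R : R)%:E.
  rewrite sumEFin lee_fin -natr_sum ler_nat.
  apply: (leq_trans (leq_sum _ (fun (n : 'I_M) _ => leq_b1 (b n)))).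
  by rewrite sum1_card card_ord.
by apply: leeD; [exact: le_trans sum_le_M (ltW (bx M bM))|].
Qed.

Lemma integral_itv_le_sum_truncn (R : realType) (t : R) (g : R -> \bar R)
    (a : nat -> \bar R) :
  (0 <= t)%R -> (forall n, 0 <= a n) ->
  (forall s, (0 <= s <= t)%R -> 0 <= g s) ->
  (forall s, (0 <= s <= t)%R -> g s <= a (Num.truncn (t - s))) ->
  \int[lebesgue_measure]_(s in `[0%R, t]) g s <= \sum_(n < (Num.truncn t).+1) a n.
Proof.
move=> t0 a0 g0 g_le; set N := (Num.truncn t).+1.
pose I n := `](t - n.+1%:R)%R, (t - n%:R)%R]%classic : set R.
have mI n : measurable (I n) by exact: measurable_itv.
pose U s := \sum_(n < N) a n * (\1_(I n) s)%:E.
apply: (@le_trans _ _ (\int[lebesgue_measure]_(s in `[0%R, t]) U s)).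
  apply: ge0_le_integral_nonmeasurable => s; rewrite /= in_itv/= => s0t.
    exact: g0.
  have tsge0 : (0 <= t - s)%R by rewrite subr_ge0; case/andP: s0t.
  have ltN : (Num.truncn (t - s) < N)%N.
    by rewrite ltnS le_truncn // lerBlDr lerDl; case/andP: s0t.
  rewrite /U (bigD1 (Ordinal ltN)) //= indicE mem_set /=; last first.
    have := truncnS_gt (t - s); have := truncn_le (t - s).
    rewrite tsge0 /I /= in_itv /= -natr1 => le_ts lt_ts.
    by apply/andP; split; lra.
  rewrite mule1; apply: le_trans (g_le s s0t) (leeDl _ _).
  by apply: sume_ge0 => n _; exact: mule_ge0.
have mind n : measurable_fun `[0%R, t] (fun s => (\1_(I n) s : R)%:E).
  by apply: measurableT_comp => //; exact: measurable_indic.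
rewrite ge0_integral_sum //; last 2 first.
- by move=> n; exact: measurable_funeM (mind n).
- by move=> n s _; exact: mule_ge0.
apply: lee_sum => n _; rewrite ge0_integralZl //; last exact: mind.
rewrite integral_indic //; last exact: mI.
rewrite -[X in _ <= X]mule1; apply: lee_wpmul2l => //.
apply: (@le_trans _ _ (lebesgue_measure (I n))).
  apply: le_measure; rewrite ?inE //; last exact: mI.
  exact: measurableI (mI n) (measurable_itv _).
rewrite /I lebesgue_measure_itv /= lte_fin ltrD2l ltrN2 ltr_nat ltnSn -EFinD.
by rewrite lee_fin; lra.
Qed.

Lemma Sfun_ge (R : realType) (z : R -> R) (s t m : R) :
  (s <= t)%R -> (0 < m)%R -> (forall r, (s <= r <= t)%R -> (0 <= z r <= m)%R) ->
  (forall r, (s < r <= t)%R -> (0 < z r)%R) ->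
  ((t - s) / m)%:E <= Sfun z s t.
Proof.
(* z may vanish at r = s (when s = 0), where 1 / z is 0: the minorant only
   charges ]s, t]. *)
move=> st m0 z_le z_gt0; pose J := `]s, t]%classic : set R.
have mJ : measurable J by exact: measurable_itv.
apply: (@le_trans _ _ (\int[lebesgue_measure]_(r in `[s, t]) (m^-1 * \1_J r)%:E)).
  under eq_integral do rewrite EFinM.
  rewrite ge0_integralZl //; last 2 first.
  - by apply: measurableT_comp => //; exact: measurable_indic.
  - by rewrite lee_fin invr_ge0 ltW.
  rewrite integral_indic //.
  rewrite setIidl; last exact: subset_itv_oc_cc.
  rewrite -[X in _ * X]/(lebesgue_measure J) lebesgue_measure_itv /= lte_fin.
  case: ltP => [lt_st|]; first by rewrite -EFinD -EFinM mulrC.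
  move=> ts; have -> : s = t by apply/eqP; rewrite eq_le st ts.
  by rewrite subrr mul0r mule0.
apply: ge0_le_integral_nonmeasurable => r; rewrite /= in_itv/= => /andP[sr rt].
  by rewrite lee_fin mulr_ge0 // invr_ge0 ltW.
have /andP[zr0 zrm] : (0 <= z r <= m)%R by apply: z_le; rewrite sr.
rewrite lee_fin indicE; case: (boolP (r \in J)) => [rJ|_]; last first.
  by rewrite mulr0 invr_ge0.
have s_lt_r : (s < r)%R by move: rJ; rewrite inE /J /= in_itv /= => /andP[].
by rewrite mulr1 lef_pV2 ?posrE // z_gt0 // s_lt_r rt.
Qed.

Section orthants.
Variables (R : realType) (m : R).
Hypothesis m_ge1 : (1 <= m)%R.

Local Notation Q := (@quadrant R).

Definition orthant (n : nat) :=
  [set p : \bar R * \bar R | ((n%:R / m)%:E < p.1) /\ ((n%:R)%:E < p.2)].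

Lemma sum_indic_orthant_le (K N : nat) (p : \bar R * \bar R) : Q p ->
  \sum_(n < N) (\1_(orthant n) p : R)%:E <=
    (K%:R + 2)%:E +
    m%:E * ((fun q => Order.min q.1 q.2) \_ [set q | (K%:R : R)%:E < q.2]) p.
Proof.
case=> p1_ge0 p2_ge0; have m_gt0 : (0 < m)%R by exact: lt_le_trans m_ge1.
under eq_bigr do rewrite indicE.
rewrite /patch; case: ifPn => [_|].
  set x := m%:E * Order.min p.1 p.2.
  have x_ge0 : 0 <= x.
    by apply: mule_ge0; [rewrite lee_fin ltW|rewrite le_min p1_ge0].
  apply: le_trans (sum_bool_le_add1 (b := fun n => p \in orthant n) N x_ge0 _) _.
    move=> n /set_mem[np1 np2]; rewrite /x.
    have [p12|p21] := leP p.1 p.2.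
      by rewrite -lte_pdivrMl // -EFinM mulrC.
    apply: lt_le_trans np2 _.
    by rewrite lee_pemull // lee_fin ltW.
  rewrite addeC; apply: leeD => //; rewrite lee_fin; have := ler0n R K; lra.
rewrite mule0 adde0 notin_setE /= => /negP; rewrite -leNgt => p2_le_K.
have K_ge0 : 0 <= (K%:R : R)%:E by rewrite lee_fin.
apply: le_trans (sum_bool_le_add1 (b := fun n => p \in orthant n) N K_ge0 _) _.
  by move=> n /set_mem[_ np2]; exact: lt_le_trans p2_le_K.
by rewrite -EFinD lee_fin lerD2l ler1n.
Qed.

Lemma sum_orthant_le (P : probability (\bar R * \bar R)%type R) (K N : nat) :
  P (~` Q) = 0 ->
  \sum_(n < N) P (orthant n) <= (K%:R + 2)%:E + m%:E * min_tail P K%:R.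
Proof.
move=> PQ; have mQ := @measurable_quadrant R.
pose B := [set q : \bar R * \bar R | (K%:R : R)%:E < q.2].
pose mnB := (fun q : \bar R * \bar R => Order.min q.1 q.2) \_ B.
have m_orthant n : measurable (orthant n) by exact: measurable_lt_fst_snd.
have mnB_ge0 q : Q q -> 0 <= mnB q.
  by case=> q1 q2; rewrite /mnB /patch; case: ifP; rewrite // le_min q1 q2.
have m_mnB : measurable_fun Q mnB.
  apply/(measurable_restrict _ (measurable_snd_gt _) mQ).
  exact: measurable_fun_min_fst_snd.
have m_indic n : measurable_fun setT (fun q => (\1_(orthant n) q : R)%:E).
  by apply: measurableT_comp => //; exact: measurable_indic.
have -> : \sum_(n < N) P (orthant n) =
    \int[P]_(q in Q) \sum_(n < N) (\1_(orthant n) q : R)%:E.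
  rewrite -[in RHS](setTI Q) -integral_setI_conull //; last exact: emeasurable_sum.
  rewrite ge0_integral_sum //.
  by apply: eq_bigr => n _; rewrite integral_indic // setIT.
apply: le_trans (ge0_le_integral_nonmeasurable _ _ (@sum_indic_orthant_le K N)) _.
  by move=> q _; apply: sume_ge0 => n _; rewrite lee_fin.
rewrite ge0_integralD //; last 2 first.
- by move=> q Qq; apply: mule_ge0; [rewrite lee_fin (le_trans ler01)|exact: mnB_ge0].
- exact: measurable_funeM.
rewrite integral_cst // ge0_integralZl //; last by rewrite lee_fin (le_trans ler01).
rewrite -integral_mkcondr; apply: leeD; last exact: lexx.
by rewrite -[X in _ <= X]mule1 lee_wpmul2l ?lee_fin ?probability_le1 //; lra.
Qed.

End orthants.

Lemma fluid_solution_le_min_tail (R : realType) (lam : R)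
    (theta : probability (\bar R * \bar R)%type R)
    (zeta0 : {finite_measure set (\bar R * \bar R)%type -> \bar R})
    (z : R -> R) (K : nat) (t m : R) :
  (0 < lam)%R -> theta (~` @quadrant R) = 0 -> fluid_solution lam theta zeta0 z ->
  (0 <= t)%R -> (1 <= m)%R -> (forall r, (0 <= r <= t)%R -> (z r <= m)%R) ->
  (z t)%:E <= zeta0 setT + lam%:E * ((K%:R + 2)%:E + m%:E * min_tail theta K%:R).
Proof.
move=> lam_gt0 thetaQ [_ z_ge0 z_away0 z_eq] t_ge0 m_ge1 z_le.
have m_gt0 : (0 < m)%R by exact: lt_le_trans m_ge1.
have z_gt0 r : (0 < r)%R -> (0 < z r)%R.
  move=> r_gt0; have [c [c_gt0 c_le]] := z_away0 (r / 2)%R (divr_gt0 r_gt0 (ltr0n _ 2)).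
  by apply: lt_le_trans c_gt0 (c_le r _); lra.
rewrite z_eq //; apply: leeD.
  by apply: le_measure; rewrite ?inE //; exact: measurable_lt_fst_snd.
apply: lee_wpmul2l; first by rewrite lee_fin ltW.
apply: (@le_trans _ _ (\sum_(n < (Num.truncn t).+1) theta (orthant m n))); last first.
  exact: sum_orthant_le.
apply: (integral_itv_le_sum_truncn (a := fun n => theta (orthant m n))) => //.
move=> s /andP[s_ge0 s_le_t].
apply: le_measure; rewrite ?inE; [exact: measurable_lt_fst_snd..|].
move=> p /= [Sp1 tsp2]; have ts_ge0 : (0 <= t - s)%R by rewrite subr_ge0.
have trunc_le : ((Num.truncn (t - s))%:R <= t - s)%R by rewrite truncn_le ts_ge0.
split; last by apply: le_lt_trans tsp2; rewrite lee_fin.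
apply: le_lt_trans Sp1; apply: le_trans (Sfun_ge s_le_t m_gt0 _ _).
- by rewrite lee_fin ler_pM2r ?invr_gt0.
- move=> r /andP[s_le_r r_le_t]; have r_ge0 := le_trans s_ge0 s_le_r.
  by rewrite z_ge0 ?z_le ?r_ge0.
- by move=> r /andP[s_lt_r _]; apply: z_gt0; exact: le_lt_trans s_lt_r.
Qed.

Local Close Scope ereal_scope.

Theorem mainTheorem5 (R : realType) (lam : R)
  (theta : probability (\bar R * \bar R)%type R)
  (zeta0 : {finite_measure set (\bar R * \bar R)%type -> \bar R}) :
  fluid_data lam theta zeta0 ->
  (lam%:E * \int[theta]_(p in [set p | p.2 = +oo%E]) p.1 < 1)%E ->
  (\int[theta]_p Order.min p.1 p.2 < +oo)%E ->
  forall z : R -> R, fluid_solution lam theta zeta0 z ->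
  exists M : R, forall t : R, 0 <= t -> z t <= M.
Proof.
move=> [lam_gt0 [thetaQ _ _ _] _ _] lt1 min_fin z zsol.
have [K [c tailK lam_c_lt1]] := exists_min_tail_lt thetaQ min_fin lam_gt0 lt1.
have z0E : zeta0 setT = (fine (zeta0 setT))%:E by rewrite fineK ?fin_num_measure.
exists (Num.max 1 ((fine (zeta0 setT) + lam * (K%:R + 2)) / (1 - lam * c))).
move=> T T_ge0; have [z_cont _ _ _] := zsol.
have /(EVT_max T_ge0) [t t_in z_max] : {within `[0, T], continuous z}.
  by apply: continuous_subspaceW z_cont => x /=; rewrite !in_itv/= => /andP[->].
apply: le_trans (z_max T _) _; first by rewrite in_itv/= T_ge0 lexx.
have [zt_le1|zt_gt1] := leP (z t) 1; first by rewrite le_max zt_le1.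
move: t_in; rewrite in_itv/= => /andP[t_ge0 t_le_T].
have z_le_zt r : 0 <= r <= t -> z r <= z t.
  by case/andP=> r_ge0 r_le_t; apply: z_max; rewrite in_itv/= r_ge0 (le_trans r_le_t).
have := fluid_solution_le_min_tail K lam_gt0 thetaQ zsol t_ge0 (ltW zt_gt1) z_le_zt.
rewrite z0E tailK -!EFinM -!EFinD lee_fin => zt_le.
by rewrite le_max ler_pdivlMr ?subr_gt0 //; apply/orP; right; nra.
Qed.
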